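(* For every $\delta>0$ there exist an instance of a sequential first-price auction with two additive buyers, a selling order and a tie-breaking rule, and a pure subgame perfect equilibrium whose revenue is at most $\delta$ times the Walrasian revenue $\sum_{j\in M}\big(\text{second-highest value } v_{i,j}\text{ among the buyers}\big)$. That is, there are subgame perfect equilibria for additive buyers whose ratio of revenue to the Walrasian revenue is vanishing.
   Context: Setting: a set $M$ of $m$ items and a set of buyers; buyer $i$ is additive, i.e. there are $v_{i,j}\ge 0$ with $v_i(S)=\sum_{j\in S}v_{i,j}$, and utilities are quasi-linear. Items are sold one at a time, each by a sealed-bid first-price auction without reserve price (a highest bidder wins, ties broken by a seller-chosen rule, the winner pays his bid); the seller fixes the selling order and tie-breaking rule. Full information. A pure subgame perfect equilibrium is a profile of pure strategies that is a Nash equilibrium in every subgame; its revenue is the total payment on the equilibrium path. For additive buyers the minimum Walrasian revenue equals the sum over items of the second-highest value for that item, which is the Walrasian revenue used here. *)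

From HB Require Import structures.
From mathcomp Require Import all_boot all_order all_algebra.
From mathcomp Require Import reals.
Set Implicit Arguments. Unset Strict Implicit. Unset Printing Implicit Defensive.
Import Order.TTheory GRing.Theory Num.Theory.
Local Open Scope ring_scope.

Definition bids (R : Type) (n : nat) := {ffun 'I_n -> R}.
Definition history (R : Type) (n : nat) := seq (bids R n).

Definition bid0 (R : numDomainType) (n : nat) : bids R n := [ffun => 0].

Definition is_tiebreak (R : numDomainType) (n : nat)
  (tb : history R n -> bids R n -> 'I_n) : Prop :=
  forall (h : history R n) (b : bids R n) (i : 'I_n), b i <= b (tb h b).

Fixpoint play_from (R : Type) (n : nat) (s : 'I_n -> history R n -> R)
    (k : nat) (h : history R n) : history R n :=
  match k with
  | 0 => h
  | k'.+1 => play_from s k' (rcons h [ffun i => s i h])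
  end.

Definition outcome (R : Type) (n m : nat) (s : 'I_n -> history R n -> R)
    (h : history R n) : history R n :=
  play_from s (m - size h) h.

Definition stage_winner (R : numDomainType) (n : nat)
    (tb : history R n -> bids R n -> 'I_n) (H : history R n) (k : nat) : 'I_n :=
  tb (take k H) (nth (bid0 R n) H k).

Definition stage_price (R : numDomainType) (n : nat)
    (tb : history R n -> bids R n -> 'I_n) (H : history R n) (k : nat) : R :=
  nth (bid0 R n) H k (stage_winner tb H k).

(* Quasi-linear utility of additive buyer i; at stage k item ord k is sold. *)
Definition utility (R : numDomainType) (n m : nat) (v : 'I_n -> 'I_m -> R)
    (ord : 'I_m -> 'I_m) (tb : history R n -> bids R n -> 'I_n)
    (i : 'I_n) (H : history R n) : R :=
  \sum_(k < m) (if stage_winner tb H k == i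
                then v i (ord k) - stage_price tb H k else 0).

Definition revenue (R : numDomainType) (n m : nat)
    (tb : history R n -> bids R n -> 'I_n) (H : history R n) : R :=
  \sum_(k < m) stage_price tb H k.

Definition valid_strategy (R : numDomainType) (n : nat)
    (s' : history R n -> R) : Prop := forall h, 0 <= s' h.

Definition valid_history (R : numDomainType) (n : nat) (h : history R n) : bool :=
  all (fun b : bids R n => [forall i, 0 <= b i]) h.

Definition deviate (R : Type) (n : nat) (s : 'I_n -> history R n -> R)
    (i : 'I_n) (s' : history R n -> R) : 'I_n -> history R n -> R :=
  fun k => if k == i then s' else s k.

Definition is_SPE (R : numDomainType) (n m : nat) (v : 'I_n -> 'I_m -> R)
    (ord : 'I_m -> 'I_m) (tb : history R n -> bids R n -> 'I_n)
    (s : 'I_n -> history R n -> R) : Prop :=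
  (forall i, valid_strategy (s i)) /\
  forall h : history R n, valid_history h -> (size h <= m)%N ->
  forall (i : 'I_n) (s' : history R n -> R), valid_strategy s' ->
    utility v ord tb i (outcome m (deviate s i s') h)
      <= utility v ord tb i (outcome m s h).

(* second-highest value among nonnegative numbers x i (with multiplicity) *)
Definition second_highest (R : realDomainType) (n : nat) (x : 'I_n -> R) : R :=
  \big[Num.max/0]_(i < n) \big[Num.max/0]_(i' < n | i' != i) Num.min (x i) (x i').

Definition walrasian_revenue (R : realDomainType) (n m : nat)
    (v : 'I_n -> 'I_m -> R) : R :=
  \sum_(j < m) second_highest (fun i => v i j).

From mathcomp Require Import all_boot all_order all_algebra all_fingroup reals.
From mathcomp Require Import lra.
Import Order.TTheory GRing.Theory Num.Theory.

(** Two items are sold in turn to two buyers. Both value the first item at 1,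
    only buyer 1 values the second one (at 1), so the Walrasian revenue is 1.
    On the equilibrium path everybody bids 0: buyer 0 takes the first item and
    buyer 1 the second, both for free, and each buyer earns 1. Buyer 1 is kept
    from competing for the first item by a threat: if he wins it, buyer 0 bids
    1 on the second item, so buyer 1 keeps it only at price 1. Since a winner
    always pays at least the other bid, no deviation earns more than 1, and
    the revenue of this subgame perfect equilibrium is 0. *)

Set Implicit Arguments. Unset Strict Implicit. Unset Printing Implicit Defensive.
Local Open Scope ring_scope.

Local Notation in_order := (1%g : {perm 'I_2}).

Lemma outcome_full (R : Type) (n m : nat) (s : 'I_n -> history R n -> R)
    (h : history R n) : size h = m -> outcome m s h = h.
Proof. by move=> <-; rewrite /outcome subnn. Qed.

Lemma deviate_other (R : Type) (n : nat) (s : 'I_n -> history R n -> R)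
    (i j : 'I_n) (s' : history R n -> R) :
  j != i -> deviate s i s' j = s j.
Proof. by rewrite /deviate => /negbTE ->. Qed.

Section TwoStages.
Variables (R : numDomainType) (n : nat).
Implicit Types (tb : history R n -> bids R n -> 'I_n) (h : history R n) (b c : bids R n).

Definition win_payoff tb h b (i : 'I_n) (x : R) : R :=
  if tb h b == i then x - b (tb h b) else 0.

Lemma utility_two_stages (v : 'I_n -> 'I_2 -> R) tb (i : 'I_n) b c :
  utility v in_order tb i [:: b; c] =
  win_payoff tb [::] b i (v i ord0) + win_payoff tb [:: b] c i (v i ord_max).
Proof.
rewrite /utility big_ord_recr big_ord1 /= !perm1.
by have -> : widen_ord (leqnSn 1) ord0 = ord0 :> 'I_2 by exact: val_inj.
Qed.

Lemma revenue_two_stages tb b c :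
  revenue 2 tb [:: b; c] = b (tb [::] b) + c (tb [:: b] c).
Proof. by rewrite /revenue big_ord_recr big_ord1. Qed.

End TwoStages.

Lemma win_payoff_le (R : realDomainType) (n : nat)
    (tb : history R n -> bids R n -> 'I_n) : is_tiebreak tb ->
  forall (j : 'I_n) h (b : bids R n) (i : 'I_n) (x y : R),
  0 <= y -> x - b j <= y -> win_payoff tb h b i x <= y.
Proof.
move=> tbP j h b i x y y_ge0 le_y; rewrite /win_payoff; case: eqP => // _.
by apply: le_trans le_y; rewrite lerD2l lerN2 tbP.
Qed.

Lemma second_highest2 (R : realDomainType) (x : 'I_2 -> R) :
  0 <= x ord0 -> 0 <= x ord_max -> second_highest x = Num.min (x ord0) (x ord_max).
Proof.
move=> x0 x1.
rewrite /second_highest !big_ord_recl big_ord0.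
do 2 rewrite (big_mkcond_idem (maxxx 0)) !big_ord_recl big_ord0 /=.
have -> : lift ord0 ord0 = ord_max :> 'I_2 by exact: val_inj.
have m0 : 0 <= Num.min (x ord0) (x ord_max) by rewrite le_min x0 x1.
by rewrite (maxxx (0 : R)) (minC (x ord_max)) !(max_idPl m0) (max_idPr m0) maxxx.
Qed.

Section ThreatEquilibrium.
Variable R : realDomainType.
Implicit Types (b c : bids R 2) (h : history R 2).

Definition buyer0 : 'I_2 := ord0.
Definition buyer1 : 'I_2 := ord_max.

Lemma buyer2P (i : 'I_2) : i = buyer0 \/ i = buyer1.
Proof. by case: i => [[|[|//]]] ?; [left|right]; exact: val_inj. Qed.

Definition values (i j : 'I_2) : R := if (j == ord0) || (i == buyer1) then 1 else 0.

Lemma values_ge0 i j : 0 <= values i j.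
Proof. by rewrite /values; case: ifP. Qed.

Definition threat (h : history R 2) : R :=
  if h is [:: b] then (if b buyer0 < b buyer1 then 1 else 0) else 0.
Arguments threat : simpl never.

Definition threat_strategy (i : 'I_2) : history R 2 -> R := threat.

Definition punish_tb (h : history R 2) (b : bids R 2) : 'I_2 :=
  if (b buyer0 < b buyer1) || ((b buyer0 == b buyer1) && (size h == 1)%N)
  then buyer1 else buyer0.

Lemma punish_tbP : is_tiebreak punish_tb.
Proof.
move=> h b i; rewrite /punish_tb; case: (buyer2P i) => ->.
  by case: ifP => [/orP[/ltW //|/andP[/eqP -> _]]|_].
by case: ifP => // /norP[]; rewrite -leNgt.
Qed.

Lemma punish_tb_tie b c : c buyer0 = c buyer1 -> punish_tb [:: b] c = buyer1.
Proof. by rewrite /punish_tb => ->; rewrite eqxx orbT. Qed.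

Lemma punish_tb_first b : b buyer1 <= b buyer0 -> punish_tb [::] b = buyer0.
Proof. by rewrite /punish_tb leNgt andbF orbF => /negbTE ->. Qed.

Lemma threat_ge0 h : 0 <= threat h.
Proof. by rewrite /threat; case: h => [|b []] //; case: ifP. Qed.

Lemma threat_le1 h : threat h <= 1.
Proof. by rewrite /threat; case: h => [|b []] //; case: ifP. Qed.

Lemma equilibrium_path :
  outcome 2 threat_strategy [::] = [:: bid0 R 2; bid0 R 2].
Proof.
have bid0E : [ffun i => threat_strategy i [::]] = bid0 R 2.
  by apply/ffunP => i; rewrite !ffunE.
rewrite /outcome /= bid0E; congr [:: _; _].
by apply/ffunP => i; rewrite !ffunE /threat_strategy /threat /= !ffunE ltxx.
Qed.

Lemma equilibrium_utility i :
  utility values in_order punish_tb i (outcome 2 threat_strategy [::]) = 1.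
Proof.
rewrite equilibrium_path utility_two_stages /win_payoff.
rewrite punish_tb_first ?punish_tb_tie ?ffunE //.
by case: (buyer2P i) => ->; rewrite /values /= subr0 ?addr0 ?add0r.
Qed.

Lemma equilibrium_revenue : revenue 2 punish_tb (outcome 2 threat_strategy [::]) = 0.
Proof. by rewrite equilibrium_path revenue_two_stages !ffunE addr0. Qed.

Lemma walrasian_revenue_values : walrasian_revenue values = 1.
Proof.
rewrite /walrasian_revenue big_ord_recr big_ord1 /=.
by rewrite !second_highest2 /values /= ?ler01 ?lexx // minxx min_l ?ler01 // addr0.
Qed.

Lemma no_profitable_deviation_last b i s' :
  utility values in_order punish_tb i (outcome 2 (deviate threat_strategy i s') [:: b])
  <= utility values in_order punish_tb i (outcome 2 threat_strategy [:: b]).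
Proof.
rewrite /outcome /= !utility_two_stages lerD2l.
rewrite {2}/win_payoff punish_tb_tie ?ffunE // /threat_strategy.
have q_ge0 := threat_ge0 [:: b]; have q_le1 := threat_le1 [:: b].
case: (buyer2P i) => -> /=.
- apply: (win_payoff_le punish_tbP (j := buyer1)) => //.
  by rewrite ffunE deviate_other // /values /=; lra.
- apply: (win_payoff_le punish_tbP (j := buyer0)); rewrite /values /=.
    by rewrite subr_ge0.
  by rewrite ffunE deviate_other.
Qed.

Lemma no_profitable_deviation_first i s' : valid_strategy s' ->
  utility values in_order punish_tb i (outcome 2 (deviate threat_strategy i s') [::])
  <= utility values in_order punish_tb i (outcome 2 threat_strategy [::]).
Proof.
move=> s'_ge0; rewrite equilibrium_utility /outcome /= utility_two_stages.
case: (buyer2P i) => ->; set b := [ffun _ => _]; set c := [ffun _ => _].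
- have b1 : b buyer1 = 0 by rewrite ffunE deviate_other.
  have c1 : 0 <= c buyer1 by rewrite ffunE deviate_other //; exact: threat_ge0.
  rewrite -[1]addr0; apply: lerD.
    by apply: (win_payoff_le punish_tbP (j := buyer1)); rewrite ?b1 /values /=; lra.
  by apply: (win_payoff_le punish_tbP (j := buyer1)); rewrite /values /=; lra.
- have b0 : b buyer0 = 0 by rewrite ffunE deviate_other.
  have c0 : c buyer0 = threat [:: b] by rewrite ffunE deviate_other.
  have q_ge0 := threat_ge0 [:: b].
  case: (ltP (b buyer0) (b buyer1)) => [punished | unpunished].
    have q1 : threat [:: b] = 1 by rewrite /threat /= punished.
    rewrite -[1]addr0; apply: lerD.
      by apply: (win_payoff_le punish_tbP (j := buyer0)); rewrite ?b0 /values /=; lra.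
    by apply: (win_payoff_le punish_tbP (j := buyer0)); rewrite ?c0 ?q1 /values /=; lra.
  rewrite {1}/win_payoff punish_tb_first // add0r.
  by apply: (win_payoff_le punish_tbP (j := buyer0)); rewrite ?c0 /values /=; lra.
Qed.

Lemma threat_strategy_SPE : is_SPE values in_order punish_tb threat_strategy.
Proof.
split=> [i h|h _ h_le2 i s' s'_ge0]; first exact: threat_ge0.
case: h h_le2 => [|b [|c [|//]]] _.
- exact: no_profitable_deviation_first.
- exact: no_profitable_deviation_last.
- by rewrite !outcome_full.
Qed.

End ThreatEquilibrium.

Theorem mainTheorem4 (R : realType) (delta : R) :
  0 < delta ->
  exists (m : nat) (v : 'I_2 -> 'I_m -> R) (ord : {perm 'I_m})
         (tb : history R 2 -> bids R 2 -> 'I_2)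
         (s : 'I_2 -> history R 2 -> R),
    [/\ (forall i j, 0 <= v i j),
        is_tiebreak tb,
        is_SPE v ord tb s,
        0 < walrasian_revenue v &
        revenue m tb (outcome m s [::]) <= delta * walrasian_revenue v].
Proof.
move=> delta_gt0.
exists 2%N, (@values R), 1%g, (@punish_tb R), (@threat_strategy R).
rewrite walrasian_revenue_values equilibrium_revenue mulr1; split.
- exact: values_ge0.
- exact: punish_tbP.
- exact: threat_strategy_SPE.
- exact: ltr01.
- exact: ltW.
Qed.
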